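(* There exist absolute constants $C,c>0$ such that the following holds. Let $G=\mathrm{SL}(2,q)$ and let $v,w\in\mathbb F_q$. Suppose that either (i) $q$ is even, or (ii) $q$ is odd, $(v^2,w^2)\neq(-4,-4)$ and $(v,w)\neq(0,0)$. Let $D$ be the distribution of \[\mathrm{Tr}\left(\begin{pmatrix}0&1\\1&w\end{pmatrix}u\begin{pmatrix}v&1\\1&0\end{pmatrix}u^{-1}\right)\] for $u$ uniform in $G$. Then (1) $D$ takes each value $x\in\mathbb F_q$ with probability at most $C/q$, and (2) $D$ is within statistical distance $Cq^{-c}$ of the uniform distribution on $\mathbb F_q$.
   Context: $\mathrm{Tr}$ denotes matrix trace; the two fixed matrices are arbitrary $2\times2$ matrices over $\mathbb F_q$ (not necessarily of determinant $1$) and matrix multiplication is the usual one. $\mathrm{SL}(2,q)$ is the group of $2\times2$ determinant-one matrices over $\mathbb F_q$. *)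

From HB Require Import structures.
From mathcomp Require Import all_boot all_order all_algebra all_fingroup all_field.
From Stdlib Require Import Reals.
Set Implicit Arguments. Unset Strict Implicit. Unset Printing Implicit Defensive.
Import GRing.Theory.

Local Open Scope ring_scope.

Definition mx2 (F : fieldType) (a b c d : F) : 'M[F]_2 :=
  \matrix_(i < 2, j < 2)
    if (i == 0 :> nat) then (if (j == 0 :> nat) then a else b)
    else (if (j == 0 :> nat) then c else d).

Definition SL2 (F : finFieldType) : {set 'M[F]_2} := [set u | \det u == 1].

Definition trace_count (F : finFieldType) (v w x : F) : nat :=
  #|[set u in SL2 F |
      \tr (mx2 0 1 1 w *m u *m mx2 v 1 1 0 *m invmx u) == x]|.

Definition trD (F : finFieldType) (v w x : F) : R :=
  Rdiv (INR (trace_count v w x)) (INR #|SL2 F|).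

Definition dist_to_uniform (F : finFieldType) (v w : F) : R :=
  Rmult (Rdiv 1 2)
    (\big[Rplus/R0]_(x : F) Rabs (Rminus (trD v w x) (Rdiv 1 (INR #|F|)))).

(* Write P = [[0,1],[1,w]] and Q = [[v,1],[1,0]]. Conjugation u |-> u Q u^-1 maps the u with
   Tr (P u Q u^-1) = x into the matrices M with Tr M = v, det M = -1 and Tr (P M) = x, with
   fibres the cosets of the centralizer of Q in SL(2,q). Both of these sets embed into affine
   conics Y^2 + (aX + b)Y + cX^2 + dX + e = 0, which have at most 2q points, and at most q + 2
   points when they contain no line. The centralizer conic contains no line when v^2 + 4 <> 0
   (in characteristic 2 with v = 0 it is a double line with q points), and the trace conic
   contains none unless x is one of the two roots of x^2 - vwx - (v^2 + w^2 + 4). So every x is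
   hit at most 2q(q+2) times, all but two at most (q+2)^2 times, out of |SL(2,q)| >= q^2(q-1)
   matrices; this gives D(x) <= 8/q and a statistical distance at most 30/q. The case
   w^2 + 4 <> 0 reduces to the case v^2 + 4 <> 0 by the symmetry u |-> J u^-1 J with
   J = [[0,1],[1,0]], which swaps v and w. *)

From Stdlib Require Import Reals Lra.
From HB Require Import structures.
From mathcomp Require Import all_boot all_order all_algebra all_fingroup all_field.
Set Implicit Arguments. Unset Strict Implicit. Unset Printing Implicit Defensive.
Import GRing.Theory.

HB.instance Definition _ := Monoid.isComLaw.Build R R0 Rplus
  (fun a b c => esym (Rplus_assoc a b c)) Rplus_comm Rplus_0_l.

Section RealSums.
Local Open Scope R_scope.
Variable I : finType.
Implicit Types (f g : I -> R).

Lemma sumR_le f g : (forall x, f x <= g x) ->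
  \big[Rplus/R0]_(x : I) f x <= \big[Rplus/R0]_(x : I) g x.
Proof. by move=> fg; apply: (big_ind2 Rle) => // *; [lra | apply: Rplus_le_compat]. Qed.

Lemma sumR_add f g : \big[Rplus/R0]_(x : I) (f x + g x) =
  \big[Rplus/R0]_(x : I) f x + \big[Rplus/R0]_(x : I) g x.
Proof. by apply: (big_ind3 (fun a b c => a = b + c)) => // [|? ? ? ? ? ? -> ->]; lra. Qed.

Lemma sumR_sub f g : \big[Rplus/R0]_(x : I) (f x - g x) =
  \big[Rplus/R0]_(x : I) f x - \big[Rplus/R0]_(x : I) g x.
Proof. by apply: (big_ind3 (fun a b c => a = b - c)) => // [|? ? ? ? ? ? -> ->]; lra. Qed.

Lemma sumR_scal c f :
  \big[Rplus/R0]_(x : I) (c * f x) = c * \big[Rplus/R0]_(x : I) f x.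
Proof. by apply: (big_ind2 (fun a b => a = c * b)) => // [|? ? ? ? -> ->]; lra. Qed.

Lemma sumR_INR (f : I -> nat) :
  \big[Rplus/R0]_(x : I) INR (f x) = INR (\sum_(x : I) f x)%N.
Proof. by apply/esym/(big_ind2 (fun a b => INR a = b)) => // ? ? ? ? <- <-; rewrite -plus_INR. Qed.

Lemma sumR_const c : \big[Rplus/R0]_(x : I) c = INR #|I| * c.
Proof.
rewrite -sum1_card -sumR_INR Rmult_comm -sumR_scal.
by apply: eq_bigr => x _ /=; lra.
Qed.

Lemma sumR_delta (r : I) c : \big[Rplus/R0]_(x : I) (if x == r then c else R0) = c.
Proof. by rewrite (bigD1 r) //= eqxx big1 ?Rplus_0_r // => x /negbTE ->. Qed.

Lemma sumR_abs_centered f : \big[Rplus/R0]_(x : I) f x = 0 ->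
  \big[Rplus/R0]_(x : I) Rabs (f x) = 2 * \big[Rplus/R0]_(x : I) Rmax (f x) 0.
Proof.
move=> sum0; transitivity (\big[Rplus/R0]_(x : I) (2 * Rmax (f x) 0 - f x)).
  by apply: eq_bigr => x _; rewrite /Rmax /Rabs; case: Rle_dec; case: Rcase_abs; lra.
by rewrite sumR_sub sum0 sumR_scal Rminus_0_r.
Qed.

(* Since [D] and the uniform distribution have the same total mass, the distance is the total
   excess of [D] over [1/q]. *)
Lemma dist_uniform_le (D : I -> R) (r1 r2 : I) (alpha beta : R) :
  \big[Rplus/R0]_(x : I) D x = 1 -> (forall x, 0 <= D x <= alpha) -> 0 <= beta ->
  (forall x, x != r1 -> x != r2 -> D x <= 1 / INR #|I| + beta) ->
  1 / 2 * \big[Rplus/R0]_(x : I) Rabs (D x - 1 / INR #|I|) <= 2 * alpha + INR #|I| * beta.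
Proof.
move=> sumD D_bd beta0 D_gen.
have q0 : 0 < INR #|I| by apply/lt_0_INR/ltP/card_gt0P; exists r1.
have centered : \big[Rplus/R0]_(x : I) (D x - 1 / INR #|I|) = 0.
  by rewrite sumR_sub sumD sumR_const; field; lra.
rewrite sumR_abs_centered //.
have excess x : Rmax (D x - 1 / INR #|I|) 0 <=
    beta + (if x == r1 then alpha else R0) + (if x == r2 then alpha else R0).
  have [D0 Da] := D_bd x; have inv0 : 0 < 1 / INR #|I| by apply: Rdiv_lt_0_compat; lra.
  apply: Rmax_lub; last by case: eqP; case: eqP; lra.
  case: eqP => [_|/eqP n1]; first by case: eqP; lra.
  case: eqP => [_|/eqP n2]; first lra.
  by have := D_gen x n1 n2; lra.
have := sumR_le excess; rewrite !sumR_add sumR_const !sumR_delta; lra.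
Qed.

End RealSums.

Section CountDistribution.
Local Open Scope R_scope.

Lemma INR_leq m n : (m <= n)%N -> INR m <= INR n.
Proof. by move/leP; apply: le_INR. Qed.

Lemma INR_muln m n : INR (m * n)%N = INR m * INR n.
Proof. exact: mult_INR. Qed.

Lemma INR_addn m n : INR (m + n)%N = INR m + INR n.
Proof. exact: plus_INR. Qed.

Lemma Rdiv_le_cross a b c d : 0 < b -> 0 < d -> a * d <= c * b -> a / b <= c / d.
Proof.
move=> b0 d0 ad_cb.
have -> : a / b = a * d * / (b * d) by field; lra.
have -> : c / d = c * b * / (b * d) by field; lra.
by apply: Rmult_le_compat_r => //; apply/Rlt_le/Rinv_0_lt_compat/Rmult_lt_0_compat.
Qed.

Variables (I : finType) (N : I -> nat) (G : nat) (r1 r2 : I).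
Hypotheses (card_I_ge2 : (2 <= #|I|)%N) (G_ge : (#|I| ^ 2 * #|I|.-1 <= G)%N)
  (sum_N : (\sum_(x : I) N x)%N = G)
  (N_le : forall x, (N x <= #|I|.*2 * (#|I| + 2))%N)
  (N_le_generic : forall x, x != r1 -> x != r2 -> (N x <= (#|I| + 2) * (#|I| + 2))%N).

Let q := INR #|I|.

Let q_ge2 : 2 <= q.
Proof. exact: INR_leq card_I_ge2. Qed.

Let G_ge_cubic : q * q * (q - 1) <= INR G.
Proof.
apply: Rle_trans (INR_leq G_ge); rewrite -mulnn !INR_muln.
suff -> : INR #|I|.-1 = q - 1 by apply: Rle_refl.
by rewrite /q -{2}(prednK (ltnW card_I_ge2)) S_INR Rplus_minus_r.
Qed.

Let G_gt0 : 0 < INR G.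
Proof. by have := G_ge_cubic; have := q_ge2; nra. Qed.

Let ratio_ge0 x : 0 <= INR (N x) / INR G.
Proof. by apply: Rmult_le_pos; [apply: pos_INR | apply/Rlt_le/Rinv_0_lt_compat]. Qed.

Let ratio_le x : INR (N x) / INR G <= 8 / q.
Proof.
apply: Rdiv_le_cross; [exact: G_gt0 | lra |].
have := INR_leq (N_le x); rewrite -mul2n !INR_muln INR_addn /= -/q => Nx.
by have := G_ge_cubic; nra.
Qed.

Let ratio_le_generic x : x != r1 -> x != r2 ->
  INR (N x) / INR G <= 1 / q + 14 / (q * q).
Proof.
move=> n1 n2; have -> : 1 / q + 14 / (q * q) = (q + 14) / (q * q) by field; lra.
apply: Rdiv_le_cross; [exact: G_gt0 | nra |].
have := INR_leq (N_le_generic n1 n2); rewrite !INR_muln INR_addn /= -/q => Nx.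
by have := G_ge_cubic; nra.
Qed.

Lemma count_distribution_bounds :
  (forall x, INR (N x) / INR G <= 30 / q) /\
  1 / 2 * \big[Rplus/R0]_(x : I) Rabs (INR (N x) / INR G - 1 / q) <= 30 / q.
Proof.
split=> [x|]; first by apply: Rle_trans (ratio_le x) _; apply: Rdiv_le_cross; lra.
have sum1 : \big[Rplus/R0]_(x : I) (INR (N x) / INR G) = 1.
  under eq_bigr => x _ do rewrite /Rdiv Rmult_comm.
  by rewrite sumR_scal sumR_INR sum_N Rinv_l //; have := G_gt0; lra.
have beta0 : 0 <= 14 / (q * q).
  by apply: Rmult_le_pos; [lra | apply/Rlt_le/Rinv_0_lt_compat; nra].
apply: Rle_trans (dist_uniform_le sum1 (fun x => conj (ratio_ge0 x) (ratio_le x)) beta0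
  ratio_le_generic) _.
by rewrite -/q; right; field; lra.
Qed.

End CountDistribution.

(* Imported only now: its [ring] and [field] shadow the Stdlib tactics used above on [R]. *)
From mathcomp Require Import ring.
Local Open Scope ring_scope.

Section Mx2.
Variable F : fieldType.

Lemma mx2E (a b c d : F) i j : mx2 a b c d i j =
  if (i == 0 :> nat) then (if (j == 0 :> nat) then a else b)
  else (if (j == 0 :> nat) then c else d).
Proof. by rewrite mxE. Qed.

Lemma mx2_eta (M : 'M[F]_2) : M = mx2 (M 0 0) (M 0 1) (M 1 0) (M 1 1).
Proof.
apply/matrixP=> i j; rewrite mxE.
by case: i => [[|[|i]] Hi] //; case: j => [[|[|j]] Hj] //=; congr (M _ _); apply/val_inj.
Qed.

Lemma mulmx2 (a b c d a' b' c' d' : F) :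
  mx2 a b c d *m mx2 a' b' c' d' =
  mx2 (a * a' + b * c') (a * b' + b * d') (c * a' + d * c') (c * b' + d * d').
Proof.
apply/matrixP=> i j; rewrite !mxE !big_ord_recl big_ord0 !mxE /=.
by case: i => [[|[|i]] Hi] //; case: j => [[|[|j]] Hj] //=; rewrite addr0.
Qed.

Lemma mxtrace2 (a b c d : F) : \tr (mx2 a b c d) = a + d.
Proof. by rewrite /mxtrace !big_ord_recl big_ord0 !mxE /= addr0. Qed.

Lemma det_mx2 (a b c d : F) : \det (mx2 a b c d) = a * d - b * c.
Proof.
rewrite (expand_det_row _ 0) !big_ord_recl big_ord0 addr0 /cofactor !det_mx11 !mxE /=.
by rewrite !expr0 expr1 !mul1r; ring.
Qed.

Lemma mx2_swap_conj (a b c d : F) :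
  mx2 0 1 1 0 *m mx2 a b c d *m mx2 0 1 1 0 = mx2 d c b a.
Proof. by rewrite !mulmx2; congr mx2; ring. Qed.

End Mx2.

Lemma quadratic_other_root (F : idomainType) (b c y z : F) :
  y ^+ 2 + b * y + c = 0 -> z ^+ 2 + b * z + c = 0 -> y != z -> y = - b - z.
Proof.
move=> hy hz neq_yz; apply/eqP.
have : (y - z) * (y - (- b - z)) = 0.
  by transitivity ((y ^+ 2 + b * y + c) - (z ^+ 2 + b * z + c)); [ring | rewrite hy hz subrr].
by move/eqP; rewrite mulf_eq0 !subr_eq0 (negbTE neq_yz).
Qed.

Lemma quadratic_roots_cover (F : finFieldType) (b c : F) :
  exists r1 r2 : F, forall y, y ^+ 2 + b * y + c = 0 -> y = r1 \/ y = r2.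
Proof.
case: (pickP (fun y : F => y ^+ 2 + b * y + c == 0)) => [r /eqP hr | none]; last first.
  by exists 0, 0 => y /eqP; rewrite none.
exists r, (- b - r) => y hy.
have [-> | neq_yr] := eqVneq y r; first by left.
by right; exact: quadratic_other_root hy hr neq_yr.
Qed.

Section Conic.
Variables (F : finFieldType) (a b c d e : F).

Definition conic (X Y : F) := Y ^+ 2 + (a * X + b) * Y + (c * X ^+ 2 + d * X + e).

Definition conic_pts := [set z : F * F | conic z.1 z.2 == 0].

(* Only a line whose slope [k] is asymptotic can meet the conic in more than two points. *)
Definition conic_lineless :=
  forall k e', k ^+ 2 + a * k + c = 0 -> exists t, conic t (k * t + e') != 0.

Lemma card_conic_pts_le2q : (#|conic_pts| <= 2 * #|F|)%N.
Proof.
pose r X := odflt 0 [pick y | conic X y == 0].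
pose g (z : F * F) := (z.1, z.2 == r z.1).
have g_inj : {in conic_pts &, injective g}.
  move=> [x y] [x' y']; rewrite !inE /= => /eqP hy /eqP hy' [ex eq_r]; subst x'.
  have hr : conic x (r x) = 0.
    by rewrite /r; case: pickP => [z /eqP // | /(_ y)]; rewrite hy eqxx.
  have other z : conic x z = 0 -> z != r x -> z = - (a * x + b) - r x.
    by move=> hz; exact: quadratic_other_root hz hr.
  have [eq_y | neq_y] := eqVneq y (r x); have [eq_y' | neq_y'] := eqVneq y' (r x).
  - by rewrite eq_y eq_y'.
  - by move: eq_r; rewrite eq_y eqxx (negbTE neq_y').
  - by move: eq_r; rewrite eq_y' eqxx (negbTE neq_y).
  - by rewrite (other _ hy neq_y) (other _ hy' neq_y').
rewrite -(card_in_imset g_inj); apply: leq_trans (max_card _) _.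
by rewrite card_prod card_bool mulnC.
Qed.

Lemma conic_shift p1 p2 t k : conic (p1 + t) (p2 + k * t) =
  conic p1 p2 + t * ((a * p2 + 2%:R * c * p1 + d) + k * (2%:R * p2 + a * p1 + b))
  + t ^+ 2 * (k ^+ 2 + a * k + c).
Proof. by rewrite /conic; ring. Qed.

(* Project from a point [p] of the conic: a line through [p] that does not lie in the conic meets
   it in at most one further point. *)
Lemma card_conic_pts_lineless : conic_lineless -> (#|conic_pts| <= #|F| + 2)%N.
Proof.
move=> lineless.
have [->|[[p1 p2] hp]] := set_0Vmem conic_pts; first by rewrite cards0.
rewrite (cardsD1 (p1, p2)) hp add1n addn2 ltnS.
pose slope (z : F * F) := if z.1 == p1 then None else Some ((z.2 - p2) / (z.1 - p1)).
suff slope_inj : {in conic_pts :\ (p1, p2) &, injective slope}.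
  by rewrite -(card_in_imset slope_inj) -card_option max_card.
move: hp; rewrite inE /= => /eqP hp.
move=> [x y] [x' y']; rewrite !inE /= => /andP [neq /eqP hz] /andP [neq' /eqP hz'].
rewrite /slope /=.
have [ex|nx] := eqVneq x p1; have [ex'|nx'] := eqVneq x' p1 => //= eq_slope.
  have ny : y != p2 by apply: contraNneq neq => ->; rewrite ex.
  have ny' : y' != p2 by apply: contraNneq neq' => ->; rewrite ex'.
  rewrite /conic ex in hz; rewrite /conic ex' in hz'; rewrite /conic in hp.
  by rewrite ex ex' (quadratic_other_root hz hp ny) (quadratic_other_root hz' hp ny').
case: eq_slope; set k := (y - p2) / (x - p1) => eq_k.
have on_line s s' : s != p1 -> (s' - p2) / (s - p1) = k ->
    s = p1 + (s - p1) /\ s' = p2 + k * (s - p1).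
  by move=> ns <-; rewrite mulrVK ?unitfE ?subr_eq0 // !(addrC _ (_ - _)) !subrK.
have [ex ey] := on_line x y nx erefl; have [ex' ey'] := on_line x' y' nx' (esym eq_k).
set L := (a * p2 + 2%:R * c * p1 + d) + k * (2%:R * p2 + a * p1 + b).
set K := k ^+ 2 + a * k + c.
have along t : t != 0 -> conic (p1 + t) (p2 + k * t) = 0 -> L + t * K = 0.
  move=> nt; rewrite conic_shift hp add0r.
  have -> : t * L + t ^+ 2 * K = t * (L + t * K) by ring.
  by move/eqP; rewrite mulf_eq0 (negbTE nt) => /eqP.
have hL : L + (x - p1) * K = 0 by apply: along; rewrite ?subr_eq0 // -ex -ey.
have hL' : L + (x' - p1) * K = 0 by apply: along; rewrite ?subr_eq0 // -ex' -ey'.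
have [K0|nK] := eqVneq K 0.
  move: hL; rewrite K0 mulr0 addr0 => L0.
  have [t] := lineless k (p2 - k * p1) K0.
  have -> : t = p1 + (t - p1) by rewrite addrC subrK.
  have -> : k * (p1 + (t - p1)) + (p2 - k * p1) = p2 + k * (t - p1) by ring.
  by rewrite conic_shift -/L -/K hp L0 K0 !mulr0 !addr0 eqxx.
have /(mulIf nK) eq_t : (x - p1) * K = (x' - p1) * K by apply: (addrI L); rewrite hL hL'.
have eq_x : x = x' by rewrite ex ex' eq_t.
by rewrite ey ey' eq_x.
Qed.

End Conic.

Section Lineless.
Variable F : finFieldType.

(* Along a line of asymptotic slope the conic is affine in [t], so it lies in the conic iff it
   vanishes at [t = 0] and [t = 1]; the identities below show that this forces the displayed
   discriminant to vanish. *)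
Lemma trace_conic_lineless (v w x : F) :
  x ^+ 2 - w * v * x - (v ^+ 2 + w ^+ 2 + 4%:R) != 0 ->
  conic_lineless (- w) (w * v - x) (- 1) v 1.
Proof.
move=> nx k e hk.
have [h0|] := eqVneq (conic (- w) (w * v - x) (- 1) v 1 0 (k * 0 + e)) 0; last by exists 0.
have [h1|] := eqVneq (conic (- w) (w * v - x) (- 1) v 1 1 (k * 1 + e)) 0; last by exists 1.
move: nx hk; set K := k ^+ 2 + - w * k + - 1 => + hk.
set c0 := conic _ _ _ _ _ 0 _ in h0; set c1 := conic _ _ _ _ _ 1 _ in h1.
have -> : x ^+ 2 - w * v * x - (v ^+ 2 + w ^+ 2 + 4%:R) =
    - (2%:R * k - w) ^+ 2 * c0 + K * (4%:R - (x - w * v) ^+ 2)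
    + (c1 - K - c0) * (w * (x - w * v) - 2%:R * v + (c1 - K - c0)).
  by rewrite /c0 /c1 /K /conic; ring.
by rewrite h0 h1 hk !(mulr0, subr0, addr0, mul0r, sub0r, oppr0) eqxx.
Qed.

Lemma centralizer_conic_lineless (t : F) : t ^+ 2 + 4%:R != 0 ->
  conic_lineless t 0 (- 1) 0 (- 1).
Proof.
move=> nt k e hk.
have [h0|] := eqVneq (conic t 0 (- 1) 0 (- 1) 0 (k * 0 + e)) 0; last by exists 0.
have [h1|] := eqVneq (conic t 0 (- 1) 0 (- 1) 1 (k * 1 + e)) 0; last by exists 1.
move: nt hk; set K := k ^+ 2 + t * k + - 1 => + hk.
set c0 := conic _ _ _ _ _ 0 _ in h0; set c1 := conic _ _ _ _ _ 1 _ in h1.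
have -> : t ^+ 2 + 4%:R = (c1 - K - c0) ^+ 2 - (2%:R * k + t) ^+ 2 * c0 - 4%:R * K.
  by rewrite /c0 /c1 /K /conic; ring.
by rewrite h0 h1 hk !(mulr0, subr0, addr0, mul0r, sub0r, oppr0, expr0n) eqxx.
Qed.

End Lineless.

Section Conjugation.
Variable F : finFieldType.

Lemma SL2_det (u : 'M[F]_2) : u \in SL2 F -> \det u = 1.
Proof. by rewrite inE => /eqP. Qed.

Lemma SL2_unitmx (u : 'M[F]_2) : u \in SL2 F -> u \in unitmx.
Proof. by rewrite unitmxE => /SL2_det ->; rewrite unitr1. Qed.

Definition centralizer_SL2 (Q : 'M[F]_2) := [set g in SL2 F | g *m Q == Q *m g].

Lemma card_conj_fiber_le (Q M : 'M[F]_2) (S : {set 'M[F]_2}) : S \subset SL2 F ->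
  (#|[set u in S | u *m Q *m invmx u == M]| <= #|centralizer_SL2 Q|)%N.
Proof.
move=> sS.
have [->|[u0]] := set_0Vmem [set u in S | u *m Q *m invmx u == M]; first by rewrite cards0.
rewrite inE => /andP [/(subsetP sS) u0SL /eqP eM].
have u0U := SL2_unitmx u0SL.
rewrite -(card_imset _ (can_inj (mulKVmx u0U))).
apply/subset_leq_card/subsetP => g /imsetP [u].
rewrite inE => /andP [/(subsetP sS) uSL /eqP eu] ->.
rewrite !inE det_mulmx det_inv !SL2_det // invr1 mulr1 eqxx /=.
have uQ : u *m Q = u0 *m Q *m invmx u0 *m u by rewrite eM -eu mulmxKV // SL2_unitmx.
by rewrite -mulmxA uQ !mulmxA mulVmx // mul1mx.
Qed.

Lemma card_le_conj_image (Q : 'M[F]_2) (S T : {set 'M[F]_2}) : S \subset SL2 F ->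
  {in S, forall u, u *m Q *m invmx u \in T} -> (#|S| <= #|T| * #|centralizer_SL2 Q|)%N.
Proof.
move=> sS ST.
rewrite -sum1_card (partition_big_imset (fun u => u *m Q *m invmx u)) /=.
apply: (@leq_trans (\sum_(M in [set u *m Q *m invmx u | u in S]) #|centralizer_SL2 Q|)).
  by apply: leq_sum => M _; rewrite sum1dep_card; exact: card_conj_fiber_le.
rewrite sum_nat_const leq_mul2r; apply/orP; right.
by apply/subset_leq_card/subsetP => M /imsetP [u uS ->]; exact: ST.
Qed.

End Conjugation.

Section TraceCount.
Variable F : finFieldType.
Implicit Types (v w x t : F).

Definition trace_conic v w x := conic_pts (- w) (w * v - x) (- 1) v 1.
Definition centralizer_conic t := conic_pts t 0 (- 1) 0 (- 1).

Definition trace_set v w x := [set M : 'M[F]_2 |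
  [&& \tr M == v, \det M == -1 & \tr (mx2 0 1 1 w *m M) == x]].

(* [M] is determined by [(M 0 0, M 1 0)]: the trace gives [M 1 1] and [tr (P M) = x] gives
   [M 0 1]; the determinant condition is the conic. *)
Lemma card_trace_set_le v w x :
  (#|trace_set v w x| <= #|trace_conic v w x|)%N.
Proof.
have entries (M : 'M[F]_2) : M \in trace_set v w x ->
    [/\ M 1 1 = v - M 0 0, M 0 1 = x - M 1 0 - w * (v - M 0 0)
      & conic (- w) (w * v - x) (- 1) v 1 (M 0 0) (M 1 0) = 0].
  rewrite inE (mx2_eta M) mulmx2 !mxtrace2 det_mx2 -!(mx2_eta M).
  case/and3P => /eqP tM /eqP dM /eqP xM.
  have e11 : M 1 1 = v - M 0 0 by rewrite -tM; ring.
  have e01 : M 0 1 = x - M 1 0 - w * (v - M 0 0) by rewrite -xM -e11; ring.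
  split=> //; rewrite /conic; transitivity (M 0 0 * M 1 1 - M 0 1 * M 1 0 + 1).
    by rewrite e11 e01; ring.
  by rewrite dM addNr.
have pos_inj : {in trace_set v w x &, injective (fun M : 'M[F]_2 => (M 0 0, M 1 0))}.
  move=> M M' /entries [e11 e01 _] /entries [e11' e01' _] [e00 e10].
  by rewrite (mx2_eta M) (mx2_eta M') e11 e01 e11' e01' e00 e10.
rewrite -(card_in_imset pos_inj); apply/subset_leq_card/subsetP => z /imsetP [M].
by move=> /entries [_ _ hM] ->; rewrite inE hM.
Qed.

Lemma card_centralizer_le t :
  (#|centralizer_SL2 (mx2 t 1 1 0)| <= #|centralizer_conic t|)%N.
Proof.
have entries (g : 'M[F]_2) : g \in centralizer_SL2 (mx2 t 1 1 0) ->
    [/\ g 1 0 = g 0 1, g 0 0 = t * g 0 1 + g 1 1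
      & conic t 0 (- 1) 0 (- 1) (g 0 1) (g 1 1) = 0].
  rewrite !inE (mx2_eta g) !mulmx2 det_mx2 -!(mx2_eta g).
  case/andP => /eqP dg /eqP /matrixP comm.
  have := comm 0 0; have := comm 0 1; rewrite !mx2E /= => c01 c00.
  have e10 : g 1 0 = g 0 1.
    by transitivity ((t * g 0 0 + 1 * g 1 0) - t * g 0 0); [ring | rewrite -c00; ring].
  have e00 : g 0 0 = t * g 0 1 + g 1 1.
    by transitivity (g 0 0 * 1 + g 0 1 * 0); [ring | rewrite c01; ring].
  split=> //; move: dg; rewrite e10 e00 => dg.
  transitivity ((t * g 0 1 + g 1 1) * g 1 1 - g 0 1 * g 0 1 - 1); first by rewrite /conic; ring.
  by rewrite dg subrr.
have pos_inj : {in centralizer_SL2 (mx2 t 1 1 0) &,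
    injective (fun g : 'M[F]_2 => (g 0 1, g 1 1))}.
  move=> g g' /entries [e10 e00 _] /entries [e10' e00' _] [e01 e11].
  by rewrite (mx2_eta g) (mx2_eta g') e10 e00 e10' e00' e01 e11.
rewrite -(card_in_imset pos_inj); apply/subset_leq_card/subsetP => z /imsetP [g].
by move=> /entries [_ _ hg] ->; rewrite inE hg.
Qed.

Lemma trace_count_le_conics v w x :
  (trace_count v w x <= #|trace_conic v w x| * #|centralizer_conic v|)%N.
Proof.
apply: leq_trans (leq_mul (card_trace_set_le v w x) (card_centralizer_le v)).
apply: card_le_conj_image => [|u]; first by apply/subsetP => u; rewrite inE => /andP [].
rewrite inE => /andP [uSL /eqP tr_x]; have uU := SL2_unitmx uSL.
rewrite inE -tr_x !mulmxA eqxx andbT.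
rewrite mxtrace_mulC mulmxA mulVmx // mul1mx mxtrace2 addr0 eqxx /=.
by rewrite !det_mulmx det_inv SL2_det // invr1 mulr1 mul1r det_mx2 mulr0 mulr1 sub0r.
Qed.

Lemma trace_count_le_sym v w x : (trace_count v w x <= trace_count w v x)%N.
Proof.
pose J := mx2 0 1 1 0 : 'M[F]_2.
have JJ : J *m J = 1%:M.
  rewrite mulmx2 !(mul0r, mulr0, mul1r, add0r, addr0).
  by apply/matrixP => i j; rewrite !mxE; case: i j => [[|[|i]] Hi] [[|[|j]] Hj].
have detJ : \det J = -1 by rewrite det_mx2 mulr0 mulr1 sub0r.
pose f u := J *m invmx u *m J.
have f_inj : injective f.
  move=> u u' /(congr1 (fun A => J *m A *m J)).
  rewrite /f !mulmxA JJ !mul1mx -!mulmxA JJ !mulmx1.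
  exact: (can_inj invmxK).
rewrite /trace_count -(card_imset _ f_inj); apply/subset_leq_card/subsetP => u0 /imsetP [u].
rewrite inE => /andP [uSL /eqP tr_x] ->; have uU := SL2_unitmx uSL.
have fuSL : f u \in SL2 F.
  by rewrite inE !det_mulmx det_inv (SL2_det uSL) invr1 mulr1 detJ mulrNN mulr1.
have inv_fu : invmx (f u) = J *m u *m J.
  have fuK : f u *m (J *m u *m J) = 1%:M.
    by rewrite /f !mulmxA -(mulmxA _ J J) JJ mulmx1 mulmxKV // JJ.
  by rewrite -[LHS]mulmx1 -fuK mulKmx ?SL2_unitmx.
have JK A : A *m J *m J = A by rewrite -mulmxA JJ mulmx1.
rewrite inE fuSL inv_fu /f -[mx2 0 1 1 v](mx2_swap_conj v 1 1 0) -/J.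
rewrite -[mx2 w 1 1 0](mx2_swap_conj 0 1 1 w) -/J !mulmxA !JK -tr_x.
rewrite mxtrace_mulC !mulmxA JJ mul1mx /=.
by rewrite -[X in _ == \tr X]mulmxA [X in _ == X]mxtrace_mulC !mulmxA.
Qed.

Lemma trace_count_sym v w x : trace_count v w x = trace_count w v x.
Proof. by apply/anti_leq; rewrite !trace_count_le_sym. Qed.

End TraceCount.

Section Bounds.
Variable F : finFieldType.
Implicit Types (v w x t : F).

Lemma sum_trace_count v w : (\sum_(x : F) trace_count v w x)%N = #|SL2 F|.
Proof.
rewrite -sum1_card (partition_big
  (fun u => \tr (mx2 0 1 1 w *m u *m mx2 v 1 1 0 *m invmx u)) xpredT) //.
by apply: eq_bigr => x _; rewrite sum1dep_card.
Qed.

Lemma card_SL2_ge : (#|F| ^ 2 * #|F|.-1 <= #|SL2 F|)%N.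
Proof.
pose D := setX (setX [set~ (0 : F)] [set: F]) [set: F].
pose f (z : F * F * F) := mx2 z.1.1 z.1.2 z.2 ((1 + z.1.2 * z.2) / z.1.1).
have f_inj : {in D &, injective f}.
  move=> [[a b] c] [[a' b'] c'] _ _ /matrixP E.
  by have := E 0 0; have := E 0 1; have := E 1 0; rewrite !mxE /= => -> -> ->.
have -> : (#|F| ^ 2 * #|F|.-1 = #|D|)%N.
  by rewrite !cardsX cardsC1 !cardsT -mulnA mulnn mulnC.
rewrite -(card_in_imset f_inj); apply/subset_leq_card/subsetP => M /imsetP [[[a b] c]].
rewrite !inE andbT => /andP [a0 _] ->.
by rewrite det_mx2 mulrC divfK //; apply/eqP; ring.
Qed.

Lemma char2_of_even : ~~ odd #|F| -> 2%:R = 0 :> F.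
Proof.
move=> even_q; have := expf_card (-1 : F).
rewrite -signr_odd (negbTE even_q) expr0 => one_eq.
have -> : 2%:R = 1 - (-1) :> F by rewrite opprK -mulr2n.
by rewrite -one_eq subrr.
Qed.

Definition disc_nonzero_or_char2 t := (t ^+ 2 + 4%:R != 0) || (2%:R == 0 :> F).

Lemma card_centralizer_conic_le t :
  disc_nonzero_or_char2 t -> (#|centralizer_conic t| <= #|F| + 2)%N.
Proof.
rewrite /disc_nonzero_or_char2.
have [nt _|/negPn/eqP t4] := boolP (t ^+ 2 + 4%:R != 0).
  exact/card_conic_pts_lineless/centralizer_conic_lineless.
move=> /eqP char2.
have four0 : 4%:R = 0 :> F by rewrite (_ : 4 = 2 * 2)%N // natrM char2 mulr0.
have t0 : t = 0.
  by apply/eqP; move: t4; rewrite four0 addr0 => /eqP; rewrite expf_eq0.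
(* In characteristic 2 the conic [Y^2 - X^2 - 1 = 0] is the double line [Y = X + 1]. *)
have on_line (z : F * F) : z \in centralizer_conic 0 -> z.2 = z.1 + 1.
  case: z => X Y; rewrite inE /= => /eqP hz.
  have : (Y - X - 1) ^+ 2 = 0.
    transitivity (conic 0 0 (-1) 0 (-1) X Y + 2%:R * (X ^+ 2 + 1 - X * Y - Y + X)).
      by rewrite /conic; ring.
    by rewrite hz char2 mul0r addr0.
  by move/eqP; rewrite expf_eq0 /= subr_eq0 subr_eq => /eqP ->; ring.
have fst_inj : {in centralizer_conic 0 &, injective (fun z : F * F => z.1)}.
  by move=> [X Y] [X' Y'] /on_line /= -> /on_line /= -> /= ->.
rewrite t0 -(card_in_imset fst_inj); apply: leq_trans (max_card _) _; exact: leq_addr.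
Qed.

Lemma disc_nonzero_or_char2_either v w :
  ~~ odd #|F| \/ ~ (v ^+ 2 = - 4%:R /\ w ^+ 2 = - 4%:R) ->
  disc_nonzero_or_char2 v \/ disc_nonzero_or_char2 w.
Proof.
rewrite /disc_nonzero_or_char2; case=> [/char2_of_even -> | not_both].
  by rewrite eqxx !orbT; left.
have [v4|/negPn/eqP v4] := boolP (v ^+ 2 + 4%:R != 0); first by left.
right; apply/orP; left; apply/eqP => w4; apply: not_both.
by split; apply/eqP; rewrite -addr_eq0 ?v4 ?w4.
Qed.

Lemma trace_count_bounds v w : disc_nonzero_or_char2 v \/ disc_nonzero_or_char2 w ->
  exists r1 r2 : F, forall x,
    (trace_count v w x <= #|F|.*2 * (#|F| + 2))%N /\
    (x != r1 -> x != r2 -> (trace_count v w x <= (#|F| + 2) * (#|F| + 2))%N).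
Proof.
move=> good; wlog good_v : v w good / disc_nonzero_or_char2 v => [sym_bounds|].
  case: (good) => [|gw]; first exact: sym_bounds.
  have [r1 [r2 hr]] := sym_bounds w v (or_introl gw) gw.
  by exists r1, r2 => x; rewrite trace_count_sym.
have [r1 [r2 hr]] := quadratic_roots_cover (- (w * v)) (- (v ^+ 2 + w ^+ 2 + 4%:R)).
exists r1, r2 => x; split => [|n1 n2]; apply: leq_trans (trace_count_le_conics v w x) _.
  by rewrite -mul2n; apply: leq_mul (card_conic_pts_le2q _ _ _ _ _) (card_centralizer_conic_le _).
apply: leq_mul (card_centralizer_conic_le good_v).
apply/card_conic_pts_lineless/trace_conic_lineless/eqP => hx.
have root_x : x ^+ 2 + - (w * v) * x + - (v ^+ 2 + w ^+ 2 + 4%:R) = 0 by rewrite -hx; ring.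
by case: (hr x root_x) => ex; [move: n1 | move: n2]; rewrite ex eqxx.
Qed.

End Bounds.

Theorem mainTheorem20 :
  exists (C c : R), Rlt R0 C /\ Rlt R0 c /\
  forall (F : finFieldType) (v w : F),
    (~~ odd #|F| \/
     (odd #|F| /\ ~ (v ^+ 2 = - (4%:R) /\ w ^+ 2 = - (4%:R)) /\ ~ (v = 0 /\ w = 0))) ->
    (forall x : F, Rle (trD v w x) (Rdiv C (INR #|F|))) /\
    Rle (dist_to_uniform v w) (Rmult C (Rpower (INR #|F|) (Ropp c))).
Proof.
Local Open Scope R_scope.
exists 30, 1; split; [lra | split; [lra | move=> F v w hyp]].
have good : disc_nonzero_or_char2 v \/ disc_nonzero_or_char2 w.
  by case: hyp => [even | [_ [not_both _]]]; apply: disc_nonzero_or_char2_either; [left | right].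
have [r1 [r2 count_bd]] := trace_count_bounds good.
have [D_le dist_le] := count_distribution_bounds (finNzRing_gt1 F) (card_SL2_ge F)
  (sum_trace_count v w) (fun x => (count_bd x).1) (fun x => (count_bd x).2).
rewrite Rpower_Ropp Rpower_1; last exact/lt_0_INR/ltP/ltnW/finNzRing_gt1.
by split.
Qed.
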